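(* Let $A$ be a real $m\times m$ matrix, $f$ in the range of $A$, $y$ the minimal-norm solution of $Ay=f$ (so $y\perp\mathcal{N}(A)$). Fix $q\in(0,1)$, $C>1$, $\varepsilon\in(0,1)$. For each $\delta\in(0,1)$ let $f_\delta\in\mathbb{R}^m$ satisfy $\|f_\delta-f\|\le\delta$ and $\|f_\delta\|>C\delta^\varepsilon$. Define $u_1^\delta=0$, $u_{n+1}^\delta=q^nT_{q^n}^{-1}u_n^\delta+T_{q^n}^{-1}A^*f_\delta$ for $n\ge1$, and let $n_\delta$ be the smallest integer $n\ge1$ with $\|AT_{q^{n}}^{-1}A^*f_\delta-f_\delta\|\le C\delta^\varepsilon$. Then $$\lim_{\delta\to0}\|u_{n_\delta}^\delta-y\|=0.$$
   Context: $A^*$ is the transpose of $A$, $T:=A^*A$, $T_a:=T+aI$ for $a>0$; $\mathcal{N}(A)=\{u:Au=0\}$; $\|\cdot\|$ is the Euclidean norm. *)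

(* real m x m matrices are functions nat -> nat -> R,
   vectors in R^m are functions nat -> R; only indices < m matter. *)
From Stdlib Require Import Reals Lra Lia ClassicalEpsilon.
Open Scope R_scope.

Definition vec := nat -> R.
Definition mat := nat -> nat -> R.

Fixpoint rsum (m : nat) (g : nat -> R) : R :=
  match m with O => 0 | S k => rsum k g + g k end.

Definition vzero : vec := fun _ => 0.
Definition vadd (u v : vec) : vec := fun i => u i + v i.
Definition vsub (u v : vec) : vec := fun i => u i - v i.
Definition vscale (c : R) (u : vec) : vec := fun i => c * u i.

Definition mv (m : nat) (A : mat) (u : vec) : vec :=
  fun i => rsum m (fun j => A i j * u j).
Definition tmv (m : nat) (A : mat) (u : vec) : vec :=
  fun i => rsum m (fun j => A j i * u j).

Definition inner (m : nat) (u v : vec) : R := rsum m (fun i => u i * v i).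
Definition norm (m : nat) (u : vec) : R := sqrt (inner m u u).

Definition veq (m : nat) (u v : vec) : Prop := forall i, (i < m)%nat -> u i = v i.

(* T_a u = (A^* A + a I) u *)
Definition Tmul (m : nat) (A : mat) (a : R) (u : vec) : vec :=
  vadd (tmv m A (mv m A u)) (vscale a u).

(* T_a^{-1} w : the solution v of T_a v = w (T_a is invertible for a > 0) *)
Definition Tinv (m : nat) (A : mat) (a : R) (w : vec) : vec :=
  epsilon (inhabits vzero) (fun v => veq m (Tmul m A a v) w).

Definition min_norm_solution (m : nat) (A : mat) (f y : vec) : Prop :=
  veq m (mv m A y) f /\
  forall z, veq m (mv m A z) f -> norm m y <= norm m z.

(* uu k = u_{k+1}^delta :  u_1 = 0,
   u_{n+1} = q^n T_{q^n}^{-1} u_n + T_{q^n}^{-1} A^* fd   (n >= 1) *)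
Fixpoint uu (m : nat) (A : mat) (q : R) (fd : vec) (k : nat) : vec :=
  match k with
  | O => vzero
  | S k' =>
      let n := S k' in
      vadd (vscale (q ^ n) (Tinv m A (q ^ n) (uu m A q fd k')))
           (Tinv m A (q ^ n) (tmv m A fd))
  end.

Definition useq (m : nat) (A : mat) (q : R) (fd : vec) (n : nat) : vec :=
  uu m A q fd (n - 1).

Definition stop_cond (m : nat) (A : mat) (q C eps delta : R) (fd : vec) (n : nat) : Prop :=
  norm m (vsub (mv m A (Tinv m A (q ^ n) (tmv m A fd))) fd) <= C * Rpower delta eps.

Definition n_delta (m : nat) (A : mat) (q C eps delta : R) (fd : vec) : nat :=
  epsilon (inhabits 1%nat)
    (fun n => (1 <= n)%nat /\ stop_cond m A q C eps delta fd n /\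
              forall k, (1 <= k)%nat -> (k < n)%nat -> ~ stop_cond m A q C eps delta fd k).

(* Let S = A^T A, so that T_a = S + a I, and B_a = a T_a^{-1}, a contraction commuting
   with S and with |B_a S| <= 2 a.  As y is orthogonal to N(A) = N(S), y = S x for some x;
   likewise the noise is absorbed in some z with S z = A^T (f_delta - f), |z| <= K delta.
   One step of the iteration reads u_{n+1} - (y + z) = B_{q^n} (u_n - (y + z)), so this
   error keeps the form Z - S X with |X| <= |x| and |Z| <= |z|, whence
   |u_n - y| <= 2 q^(n-1) |x| + 2 K delta for n >= 2.
   The residual A T_a^{-1} A^T f_delta - f_delta is at most 2 a |A| |x| + delta, and
   delta < C delta^eps, so n_delta exists.  If f <> 0, the residuals of f at the finitely
   many n <= N are bounded below, so n_delta > N for small delta.  If f = 0, then y = 0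
   and one may take x = 0. *)

From Stdlib Require Import Reals Lra Lia Psatz ClassicalEpsilon FunctionalExtensionality Classical.
From HB Require Import structures.
From mathcomp Require ssreflect ssrfun ssrbool eqtype ssrnat fintype bigop ssralg matrix mxalgebra.
From mathcomp Require Rstruct.
Open Scope R_scope.

Module PseudoInverse.
Import ssreflect ssrfun ssrbool eqtype ssrnat fintype bigop ssralg matrix mxalgebra Rstruct.
Import GRing.Theory.
Local Open Scope ring_scope.

Lemma rsum_big m (g : nat -> R) : rsum m g = \sum_(i < m) g i.
Proof.
elim: m => [|m IH] /=; first by rewrite big_ord0.
by rewrite big_ord_recr /= IH.
Qed.

Definition of_ord {m} (g : 'I_m -> R) : nat -> R := fun i =>
  if insub i is Some i' then g i' else 0.

Lemma of_ordE m (g : 'I_m -> R) (i : 'I_m) : of_ord g i = g i.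
Proof. by rewrite /of_ord valK. Qed.

(* [P] is MathComp's [pinvmx] of [G]: a vector orthogonal to the kernel of [G] lies in the
   row space of [G], on which [pinvmx] is a right inverse. *)
Lemma pseudo_inverse_exists m (G : mat) : exists P : mat, forall y : vec,
  (forall v, veq m (mv m G v) vzero -> inner m y v = 0) ->
  veq m (tmv m G (tmv m P y)) y.
Proof.
pose M : 'M[R]_m := \matrix_(i, j) G i j.
exists (fun i j => of_ord (fun i' => of_ord (pinvmx M i') j) i) => y yperp j /ltP lt_jm.
pose Y : 'rV[R]_m := \row_j y j.
have YcokerM : Y *m cokermx M = 0.
  apply/matrixP => i k; rewrite !mxE.
  rewrite -[RHS](yperp (of_ord (fun l => cokermx M l k))).
    by rewrite /inner rsum_big; apply: eq_bigr => l _; rewrite of_ordE !mxE.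
  move=> l /ltP lt_lm; rewrite /mv rsum_big /vzero.
  transitivity ((M *m cokermx M) (Ordinal lt_lm) k); last by rewrite mulmx_coker mxE.
  by rewrite mxE; apply: eq_bigr => n _; rewrite of_ordE [M _ _]mxE.
have YpM : Y *m pinvmx M *m M = Y by apply: mulmxKpV; rewrite submxE YcokerM.
transitivity ((Y *m pinvmx M *m M) ord0 (Ordinal lt_jm)); last by rewrite YpM mxE.
rewrite mxE /tmv rsum_big; apply: eq_bigr => i _.
rewrite !mxE rsum_big mulrC; congr (_ * _).
by apply: eq_bigr => k _; rewrite !of_ordE [Y _ _]mxE mulrC.
Qed.

End PseudoInverse.

Lemma rsum_ext n g h : (forall i, (i < n)%nat -> g i = h i) -> rsum n g = rsum n h.
Proof.
  induction n; simpl; intros H; auto.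
  rewrite IHn by (intros; apply H; lia). rewrite H by lia. reflexivity.
Qed.

Lemma rsum_0 n : rsum n (fun _ => 0) = 0.
Proof. induction n; simpl; lra. Qed.

Lemma rsum_add n g h : rsum n (fun i => g i + h i) = rsum n g + rsum n h.
Proof. induction n; simpl; lra. Qed.

Lemma rsum_sub n g h : rsum n (fun i => g i - h i) = rsum n g - rsum n h.
Proof. induction n; simpl; lra. Qed.

Lemma rsum_mult_l n c g : rsum n (fun i => c * g i) = c * rsum n g.
Proof. induction n; simpl; lra. Qed.

Lemma rsum_mult_r n c g : rsum n (fun i => g i * c) = rsum n g * c.
Proof. induction n; simpl; lra. Qed.

Lemma rsum_swap n p g :
  rsum n (fun i => rsum p (fun j => g i j)) = rsum p (fun j => rsum n (fun i => g i j)).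
Proof.
  induction n; simpl.
  - symmetry; apply rsum_0.
  - rewrite IHn, <- rsum_add. reflexivity.
Qed.

Lemma rsum_le n g h : (forall i, (i < n)%nat -> g i <= h i) -> rsum n g <= rsum n h.
Proof.
  induction n; simpl; intros H; [lra|].
  pose proof (H n ltac:(lia)). pose proof (IHn ltac:(intros; apply H; lia)). lra.
Qed.

Lemma rsum_nonneg n g : (forall i, (i < n)%nat -> 0 <= g i) -> 0 <= rsum n g.
Proof. intros H. rewrite <- (rsum_0 n). apply rsum_le. exact H. Qed.

Lemma rsum_ge_term n g i : (forall j, (j < n)%nat -> 0 <= g j) -> (i < n)%nat -> g i <= rsum n g.
Proof.
  induction n; simpl; intros H Hi; [lia|].
  assert (0 <= rsum n g) by (apply rsum_nonneg; intros; apply H; lia).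
  destruct (Nat.eq_dec i n) as [->|].
  - lra.
  - pose proof (IHn ltac:(intros; apply H; lia) ltac:(lia)). pose proof (H n ltac:(lia)). lra.
Qed.

Lemma rsum_abs n g : Rabs (rsum n g) <= rsum n (fun i => Rabs (g i)).
Proof.
  induction n; simpl.
  - rewrite Rabs_R0; lra.
  - eapply Rle_trans; [apply Rabs_triang|]. lra.
Qed.

Lemma rsum_kronecker n i a v : (i < n)%nat ->
  rsum n (fun j => (if Nat.eqb i j then a else 0) * v j) = a * v i.
Proof.
  induction n; simpl; intros H; [lia|].
  destruct (Nat.eq_dec i n) as [->|].
  - rewrite Nat.eqb_refl, (rsum_ext n _ (fun _ => 0)), rsum_0; [lra|].
    intros j Hj. destruct (Nat.eqb_spec n j); [lia|lra].
  - rewrite IHn by lia. destruct (Nat.eqb_spec i n); [lia|lra].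
Qed.

Lemma vec_ext (u v : vec) : (forall i, u i = v i) -> u = v.
Proof. apply functional_extensionality. Qed.

Section Vectors.
Variable m : nat.

Lemma veq_sym u v : veq m u v -> veq m v u.
Proof. intros H i Hi. rewrite H; auto. Qed.

Lemma veq_sub_0 u v : veq m (vsub u v) vzero -> veq m u v.
Proof. intros H i Hi. specialize (H i Hi). unfold vsub, vzero in H. lra. Qed.

Lemma inner_sym u v : inner m u v = inner m v u.
Proof. unfold inner. apply rsum_ext; intros; lra. Qed.

Lemma inner_veq u u' v v' : veq m u u' -> veq m v v' -> inner m u v = inner m u' v'.
Proof. intros H1 H2. unfold inner. apply rsum_ext; intros. rewrite H1, H2 by auto. auto. Qed.

Lemma inner_0_l v : inner m vzero v = 0.
Proof. unfold inner, vzero. rewrite (rsum_ext m _ (fun _ => 0)) by (intros; ring). apply rsum_0. Qed.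

Lemma inner_add_l u v w : inner m (vadd u v) w = inner m u w + inner m v w.
Proof. unfold inner, vadd. rewrite <- rsum_add. apply rsum_ext; intros; lra. Qed.

Lemma inner_sub_l u v w : inner m (vsub u v) w = inner m u w - inner m v w.
Proof. unfold inner, vsub. rewrite <- rsum_sub. apply rsum_ext; intros; lra. Qed.

Lemma inner_scale_l c u w : inner m (vscale c u) w = c * inner m u w.
Proof. unfold inner, vscale. rewrite <- rsum_mult_l. apply rsum_ext; intros; lra. Qed.

Lemma inner_add_r u v w : inner m w (vadd u v) = inner m w u + inner m w v.
Proof. rewrite !(inner_sym w). apply inner_add_l. Qed.

Lemma inner_sub_r u v w : inner m w (vsub u v) = inner m w u - inner m w v.
Proof. rewrite !(inner_sym w). apply inner_sub_l. Qed.

Lemma inner_scale_r c u w : inner m w (vscale c u) = c * inner m w u.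
Proof. rewrite !(inner_sym w). apply inner_scale_l. Qed.

Lemma inner_ge_0 u : 0 <= inner m u u.
Proof. unfold inner. apply rsum_nonneg. intros. nra. Qed.

Lemma inner_eq_0 u : inner m u u = 0 -> veq m u vzero.
Proof.
  intros H i Hi. unfold vzero.
  pose proof (rsum_ge_term m (fun i => u i * u i) i ltac:(intros; nra) Hi).
  unfold inner in H. nra.
Qed.

Lemma norm_ge_0 u : 0 <= norm m u.
Proof. apply sqrt_pos. Qed.

Lemma norm_sqr u : norm m u * norm m u = inner m u u.
Proof. apply sqrt_sqrt, inner_ge_0. Qed.

Lemma norm_veq u v : veq m u v -> norm m u = norm m v.
Proof. intros H. unfold norm. rewrite (inner_veq u v u v H H). auto. Qed.

Lemma norm_eq_0 u : norm m u = 0 -> veq m u vzero.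
Proof. intros H. apply inner_eq_0. rewrite <- norm_sqr, H. lra. Qed.

Lemma norm_vzero : norm m vzero = 0.
Proof. unfold norm. rewrite inner_0_l. apply sqrt_0. Qed.

Lemma norm_veq_0 u : veq m u vzero -> norm m u = 0.
Proof. intros H. rewrite (norm_veq _ _ H). apply norm_vzero. Qed.

Lemma le_of_sqr_le a b : 0 <= b -> a * a <= b * b -> a <= b.
Proof. intros. nra. Qed.

Lemma cauchy_schwarz u v : Rabs (inner m u v) <= norm m u * norm m v.
Proof.
  pose proof (norm_sqr u) as Hu. pose proof (norm_sqr v) as Hv.
  pose proof (norm_ge_0 u). pose proof (norm_ge_0 v).
  set (a := inner m u u) in *. set (b := inner m v v) in *. set (c := inner m u v).
  assert (Hquad : forall t, 0 <= a + 2 * t * c + t * t * b).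
  { intros t. pose proof (inner_ge_0 (vadd u (vscale t v))) as P.
    rewrite inner_add_l, !inner_add_r, !inner_scale_l, !inner_scale_r, (inner_sym v u) in P.
    unfold a, b, c. nra. }
  (* the discriminant of the nonnegative quadratic [t |-> |u + t v|^2] is nonpositive *)
  assert (Hdisc : c * c <= a * b).
  { destruct (Req_dec b 0) as [Hb|Hb].
    - destruct (Req_dec c 0) as [Hc0|Hc0]; [rewrite Hc0, Hb; lra|].
      pose proof (Hquad (- (a + 1) / (2 * c))) as P. rewrite Hb in P.
      replace (2 * (- (a + 1) / (2 * c)) * c) with (-(a+1)) in P by (field; auto). nra.
    - assert (0 <= b) by apply inner_ge_0. assert (0 < b) by lra.
      pose proof (Hquad (- c / b)) as P.
      replace (a + 2 * (- c / b) * c + - c / b * (- c / b) * b) with (a - c * c / b) in P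
        by (field; lra).
      assert (c * c = (c * c / b) * b) by (field; lra). nra. }
  apply le_of_sqr_le; [apply Rmult_le_pos; auto|].
  rewrite <- Rabs_mult, Rabs_pos_eq by nra.
  replace (norm m u * norm m v * (norm m u * norm m v)) with (a * b) by (rewrite <- Hu, <- Hv; ring).
  exact Hdisc.
Qed.

Lemma inner_le_norm u v : inner m u v <= norm m u * norm m v.
Proof. eapply Rle_trans; [apply Rle_abs | apply cauchy_schwarz]. Qed.

Lemma norm_triangle u v : norm m (vadd u v) <= norm m u + norm m v.
Proof.
  pose proof (norm_ge_0 u). pose proof (norm_ge_0 v).
  apply le_of_sqr_le; [lra|].
  rewrite norm_sqr, inner_add_l, !inner_add_r, (inner_sym v u).
  pose proof (inner_le_norm u v). pose proof (norm_sqr u). pose proof (norm_sqr v). nra.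
Qed.

Lemma norm_scale c u : norm m (vscale c u) = Rabs c * norm m u.
Proof.
  pose proof (norm_ge_0 u). pose proof (Rabs_pos c).
  apply Rsqr_inj; [apply norm_ge_0 | apply Rmult_le_pos; auto |]. unfold Rsqr.
  rewrite norm_sqr, inner_scale_l, inner_scale_r.
  replace (Rabs c * norm m u * (Rabs c * norm m u)) with (Rabs (c * c) * (norm m u * norm m u))
    by (rewrite Rabs_mult; ring).
  rewrite norm_sqr, Rabs_pos_eq by nra. ring.
Qed.

Lemma norm_sub_le u v : norm m (vsub u v) <= norm m u + norm m v.
Proof.
  replace (vsub u v) with (vadd u (vscale (-1) v))
    by (apply vec_ext; intro i; unfold vadd, vsub, vscale; ring).
  eapply Rle_trans; [apply norm_triangle|].
  rewrite norm_scale, Rabs_left by lra. lra.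
Qed.

Lemma norm_add_ge u v : norm m u - norm m v <= norm m (vadd u v).
Proof.
  pose proof (norm_sub_le (vadd u v) v) as H.
  replace (vsub (vadd u v) v) with u in H by (apply vec_ext; intro i; unfold vsub, vadd; ring).
  lra.
Qed.

Lemma Rabs_coord_le_norm u i : (i < m)%nat -> Rabs (u i) <= norm m u.
Proof.
  intros Hi. apply le_of_sqr_le; [apply norm_ge_0|].
  rewrite norm_sqr, <- Rabs_mult, Rabs_pos_eq by nra.
  apply (rsum_ge_term m (fun i => u i * u i)); auto. intros; nra.
Qed.

Lemma norm_le_l1 u : norm m u <= rsum m (fun i => Rabs (u i)).
Proof.
  apply le_of_sqr_le; [apply rsum_nonneg; intros; apply Rabs_pos|].
  rewrite norm_sqr. unfold inner. clear.
  induction m as [|k IH]; simpl; [lra|].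
  assert (0 <= rsum k (fun i => Rabs (u i))) by (apply rsum_nonneg; intros; apply Rabs_pos).
  pose proof (Rabs_pos (u k)).
  replace (u k * u k) with (Rabs (u k) * Rabs (u k)) by (rewrite <- Rabs_mult; apply Rabs_pos_eq; nra).
  nra.
Qed.

End Vectors.

Definition trm (G : mat) : mat := fun i j => G j i.

Section LinearMaps.
Variable m : nat.

Lemma tmv_mv G u : tmv m G u = mv m (trm G) u.
Proof. reflexivity. Qed.

Lemma mv_veq G u v : veq m u v -> mv m G u = mv m G v.
Proof. intros H. apply vec_ext; intro i. unfold mv. apply rsum_ext. intros. rewrite H; auto. Qed.

Lemma tmv_veq G u v : veq m u v -> tmv m G u = tmv m G v.
Proof. rewrite !tmv_mv. apply mv_veq. Qed.

Lemma mv_add G u v : mv m G (vadd u v) = vadd (mv m G u) (mv m G v).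
Proof. apply vec_ext; intro i. unfold mv, vadd. rewrite <- rsum_add. apply rsum_ext; intros; ring. Qed.

Lemma mv_sub G u v : mv m G (vsub u v) = vsub (mv m G u) (mv m G v).
Proof. apply vec_ext; intro i. unfold mv, vsub. rewrite <- rsum_sub. apply rsum_ext; intros; ring. Qed.

Lemma mv_scale G c u : mv m G (vscale c u) = vscale c (mv m G u).
Proof. apply vec_ext; intro i. unfold mv, vscale. rewrite <- rsum_mult_l. apply rsum_ext; intros; ring. Qed.

Lemma mv_vzero G : mv m G vzero = vzero.
Proof. apply vec_ext; intro i. unfold mv, vzero. rewrite (rsum_ext m _ (fun _ => 0)) by (intros; ring). apply rsum_0. Qed.

Lemma inner_tmv G u v : inner m (tmv m G u) v = inner m u (mv m G v).
Proof.
  unfold inner, tmv, mv.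
  rewrite (rsum_ext m (fun i => rsum m (fun j => G j i * u j) * v i)
                      (fun i => rsum m (fun j => G j i * u j * v i)))
    by (intros; rewrite <- rsum_mult_r; auto).
  rewrite (rsum_ext m (fun i => u i * rsum m (fun j => G i j * v j))
                      (fun i => rsum m (fun j => G i j * u i * v j)))
    by (intros; rewrite <- rsum_mult_l; apply rsum_ext; intros; ring).
  apply rsum_swap.
Qed.

Lemma mv_bounded G : exists L, 0 <= L /\ forall v, norm m (mv m G v) <= L * norm m v.
Proof.
  exists (rsum m (fun i => rsum m (fun j => Rabs (G i j)))). split.
  - apply rsum_nonneg; intros; apply rsum_nonneg; intros; apply Rabs_pos.
  - intros v. eapply Rle_trans; [apply norm_le_l1|].
    rewrite <- rsum_mult_r. apply rsum_le. intros i Hi.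
    unfold mv. eapply Rle_trans; [apply rsum_abs|].
    rewrite <- rsum_mult_r. apply rsum_le. intros j Hj.
    rewrite Rabs_mult. apply Rmult_le_compat_l; [apply Rabs_pos|]. apply Rabs_coord_le_norm; auto.
Qed.

End LinearMaps.

Section NormalOperator.
Variables (m : nat) (A : mat).

Definition Smul (v : vec) : vec := tmv m A (mv m A v).
Definition Smat : mat := fun i j => rsum m (fun l => A l i * A l j).
Definition Tmat (a : R) : mat := fun i j => Smat i j + (if Nat.eqb i j then a else 0).

Lemma Smul_mat v : Smul v = mv m Smat v.
Proof.
  apply vec_ext; intro i. unfold Smul, tmv, mv, Smat.
  rewrite (rsum_ext m (fun j => A j i * rsum m (fun j0 => A j j0 * v j0))
                      (fun l => rsum m (fun j => A l i * A l j * v j)))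
    by (intros; rewrite <- rsum_mult_l; apply rsum_ext; intros; ring).
  rewrite (rsum_ext m (fun j => rsum m (fun l => A l i * A l j) * v j)
                      (fun j => rsum m (fun l => A l i * A l j * v j)))
    by (intros; rewrite <- rsum_mult_r; auto).
  apply rsum_swap.
Qed.

Lemma trm_Smat : trm Smat = Smat.
Proof.
  apply functional_extensionality; intro i; apply functional_extensionality; intro j.
  unfold trm, Smat. apply rsum_ext; intros; ring.
Qed.

Lemma trm_Tmat a : trm (Tmat a) = Tmat a.
Proof.
  apply functional_extensionality; intro i; apply functional_extensionality; intro j.
  unfold trm, Tmat, Smat. rewrite Nat.eqb_sym. f_equal. apply rsum_ext; intros; ring.
Qed.

Lemma Tmul_Smul a v : Tmul m A a v = vadd (Smul v) (vscale a v).
Proof. reflexivity. Qed.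

Lemma Tmul_mat a v : veq m (Tmul m A a v) (mv m (Tmat a) v).
Proof.
  intros i Hi. rewrite Tmul_Smul, Smul_mat. unfold vadd, vscale, mv at 2, Tmat.
  rewrite (rsum_ext m _ (fun j => Smat i j * v j + (if Nat.eqb i j then a else 0) * v j))
    by (intros; ring).
  rewrite rsum_add, rsum_kronecker by auto. reflexivity.
Qed.

Lemma Smul_veq u v : veq m u v -> Smul u = Smul v.
Proof. intros H. unfold Smul. rewrite (mv_veq m A u v H). reflexivity. Qed.

Lemma Smul_add u v : Smul (vadd u v) = vadd (Smul u) (Smul v).
Proof. unfold Smul. rewrite mv_add, !tmv_mv, mv_add. reflexivity. Qed.

Lemma Smul_sub u v : Smul (vsub u v) = vsub (Smul u) (Smul v).
Proof. unfold Smul. rewrite mv_sub, !tmv_mv, mv_sub. reflexivity. Qed.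

Lemma Smul_scale c u : Smul (vscale c u) = vscale c (Smul u).
Proof. unfold Smul. rewrite mv_scale, !tmv_mv, mv_scale. reflexivity. Qed.

Lemma Tmul_add a u v : Tmul m A a (vadd u v) = vadd (Tmul m A a u) (Tmul m A a v).
Proof. rewrite !Tmul_Smul, Smul_add. apply vec_ext; intro i; unfold vadd, vscale; ring. Qed.

Lemma Tmul_sub a u v : Tmul m A a (vsub u v) = vsub (Tmul m A a u) (Tmul m A a v).
Proof. rewrite !Tmul_Smul, Smul_sub. apply vec_ext; intro i; unfold vadd, vsub, vscale; ring. Qed.

Lemma Tmul_scale a c u : Tmul m A a (vscale c u) = vscale c (Tmul m A a u).
Proof. rewrite !Tmul_Smul, Smul_scale. apply vec_ext; intro i; unfold vadd, vscale; ring. Qed.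

Lemma Smul_Tmul a v : Smul (Tmul m A a v) = Tmul m A a (Smul v).
Proof. rewrite !Tmul_Smul, Smul_add, Smul_scale. reflexivity. Qed.

Lemma inner_Smul v : inner m (Smul v) v = inner m (mv m A v) (mv m A v).
Proof. apply inner_tmv. Qed.

Lemma inner_Smul_ge_0 v : 0 <= inner m (Smul v) v.
Proof. rewrite inner_Smul. apply inner_ge_0. Qed.

Lemma Smul_kernel v : veq m (Smul v) vzero -> veq m (mv m A v) vzero.
Proof.
  intros H. apply inner_eq_0. rewrite <- inner_Smul, (inner_veq m _ vzero v v H).
  - apply inner_0_l.
  - intros i _; reflexivity.
Qed.

Lemma Tmul_cancel a u v : 0 < a -> veq m (Tmul m A a u) (Tmul m A a v) -> veq m u v.
Proof.
  intros Ha H. apply veq_sub_0, inner_eq_0.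
  set (d := vsub u v).
  assert (E : inner m (Tmul m A a d) d = 0).
  { rewrite (inner_veq m _ vzero d d), inner_0_l; [reflexivity| |intros i _; reflexivity].
    intros i Hi. unfold d. rewrite Tmul_sub. unfold vsub, vzero. rewrite H by auto. ring. }
  rewrite Tmul_Smul, inner_add_l, inner_scale_l in E.
  pose proof (inner_Smul_ge_0 d). pose proof (inner_ge_0 m d). nra.
Qed.

Lemma Tinv_spec a w : 0 < a -> veq m (Tmul m A a (Tinv m A a w)) w.
Proof.
  intros Ha. unfold Tinv. apply epsilon_spec.
  destruct (PseudoInverse.pseudo_inverse_exists m (Tmat a)) as [P HP].
  exists (tmv m P w).
  assert (Hw : veq m (tmv m (Tmat a) (tmv m P w)) w).
  { apply HP. intros v Hv.
    assert (Hv0 : veq m v vzero).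
    { apply (Tmul_cancel a); auto.
      intros i Hi. rewrite !Tmul_mat, Hv, mv_vzero by auto. reflexivity. }
    rewrite (inner_veq m w w v vzero), inner_sym, inner_0_l; auto. intros i _; reflexivity. }
  intros i Hi. rewrite Tmul_mat, <- Hw by auto. rewrite (tmv_mv m (Tmat a)), trm_Tmat. reflexivity.
Qed.


Lemma Tinv_add a u v : 0 < a ->
  veq m (Tinv m A a (vadd u v)) (vadd (Tinv m A a u) (Tinv m A a v)).
Proof.
  intros Ha. apply (Tmul_cancel a); auto. intros i Hi.
  rewrite Tmul_add. unfold vadd. rewrite !(Tinv_spec a) by auto. reflexivity.
Qed.

Definition Bmul (a : R) (v : vec) : vec := vscale a (Tinv m A a v).

Lemma Bmul_contraction a e : 0 < a -> norm m (Bmul a e) <= norm m e.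
Proof.
  intros Ha. set (p := Tinv m A a e).
  assert (E : inner m (Tmul m A a p) p = inner m e p)
    by (apply inner_veq; [apply Tinv_spec; auto | intros i _; reflexivity]).
  rewrite Tmul_Smul, inner_add_l, inner_scale_l in E.
  pose proof (inner_Smul_ge_0 p). pose proof (inner_le_norm m e p).
  pose proof (norm_sqr m p). pose proof (norm_ge_0 m p). pose proof (norm_ge_0 m e).
  unfold Bmul. fold p. rewrite norm_scale, Rabs_pos_eq by lra.
  destruct (Req_dec (norm m p) 0) as [Z|Z]; [rewrite Z; lra|].
  apply (Rmult_le_reg_r (norm m p)); nra.
Qed.

Lemma Bmul_Smul_le a x : 0 < a -> norm m (Bmul a (Smul x)) <= 2 * a * norm m x.
Proof.
  intros Ha.
  (* [B_a S = a (I - B_a)] since [T_a = S + a I] *)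
  assert (H : veq m (Bmul a (Smul x)) (vsub (vscale a x) (vscale a (Bmul a x)))).
  { apply (Tmul_cancel a); auto. intros i Hi. unfold Bmul.
    rewrite Tmul_sub, !Tmul_scale. unfold vsub, vscale. rewrite !(Tinv_spec a) by auto.
    rewrite Tmul_Smul. unfold vadd, vscale. ring. }
  rewrite (norm_veq m _ _ H). eapply Rle_trans; [apply norm_sub_le|].
  rewrite !norm_scale, Rabs_pos_eq by lra. pose proof (Bmul_contraction a x Ha). nra.
Qed.

Lemma Smul_Bmul a v : 0 < a -> veq m (Smul (Bmul a v)) (Bmul a (Smul v)).
Proof.
  intros Ha. apply (Tmul_cancel a); auto. intros i Hi.
  unfold Bmul. rewrite <- Smul_Tmul, !Tmul_scale, Smul_scale. unfold vscale.
  rewrite (Smul_veq _ v) by (apply Tinv_spec; auto).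
  rewrite (Tinv_spec a) by auto. reflexivity.
Qed.

Definition residual (a : R) (g : vec) : vec := vsub (mv m A (Tinv m A a (tmv m A g))) g.

Lemma residual_add a f w : 0 < a ->
  veq m (residual a (vadd f w)) (vadd (residual a f) (residual a w)).
Proof.
  intros Ha. unfold residual.
  rewrite !tmv_mv, mv_add, <- !tmv_mv, (mv_veq m A _ _ (Tinv_add a _ _ Ha)), mv_add.
  intros i Hi. unfold vadd, vsub. ring.
Qed.

Lemma tmv_residual a g : 0 < a ->
  veq m (tmv m A (residual a g)) (vscale (- a) (Tinv m A a (tmv m A g))).
Proof.
  intros Ha i Hi. pose proof (Tinv_spec a (tmv m A g) Ha i Hi) as Hw.
  unfold residual. rewrite tmv_mv, mv_sub, <- !tmv_mv.
  rewrite Tmul_Smul in Hw. unfold Smul, vadd, vsub, vscale in *. lra.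
Qed.

Lemma residual_le a g : 0 < a -> norm m (residual a g) <= norm m g.
Proof.
  intros Ha. pose proof (tmv_residual a g Ha) as Hr.
  set (w := Tinv m A a (tmv m A g)) in *. set (r := residual a g) in *.
  (* [|r|^2 = <r, A w> - <r, g> = - a |w|^2 - <r, g>] *)
  assert (E : inner m r r = - a * inner m w w - inner m r g).
  { unfold r at 2. unfold residual. fold w.
    rewrite inner_sub_r, <- inner_tmv, (inner_veq m _ _ w w Hr), inner_scale_l
      by (intros i _; reflexivity).
    ring. }
  pose proof (inner_ge_0 m w). pose proof (inner_le_norm m r (vscale (-1) g)) as Hcs.
  rewrite inner_scale_r, norm_scale, Rabs_left in Hcs by lra.
  pose proof (norm_sqr m r). pose proof (norm_ge_0 m r). pose proof (norm_ge_0 m g).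
  destruct (Req_dec (norm m r) 0) as [Z|Z]; [rewrite Z; lra|].
  apply (Rmult_le_reg_r (norm m r)); nra.
Qed.

Lemma residual_pos a f : 0 < a -> ~ veq m f vzero -> 0 < norm m (residual a f).
Proof.
  intros Ha Hf. destruct (Rle_lt_or_eq_dec 0 _ (norm_ge_0 m (residual a f))) as [P|P]; auto.
  exfalso. apply Hf. symmetry in P. apply norm_eq_0 in P.
  set (w := Tinv m A a (tmv m A f)).
  assert (Hw0 : veq m w vzero).
  { intros i Hi. pose proof (tmv_residual a f Ha i Hi) as H.
    rewrite (tmv_veq m A _ _ P), tmv_mv, mv_vzero in H. fold w in H.
    unfold vzero, vscale in *. nra. }
  intros i Hi. specialize (P i Hi). unfold residual in P. fold w in P.
  rewrite (mv_veq m A _ _ Hw0), mv_vzero in P. unfold vsub, vzero in *. lra.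
Qed.

Lemma residual_le_range a f y x LA : 0 < a -> 0 <= LA ->
  (forall v, norm m (mv m A v) <= LA * norm m v) ->
  veq m (mv m A y) f -> veq m (Smul x) y ->
  norm m (residual a f) <= LA * (2 * a * norm m x).
Proof.
  intros Ha HLA HA Hy Hx.
  assert (Hsol : veq m (Tinv m A a (tmv m A f)) (vsub y (Bmul a (Smul x)))).
  { apply (Tmul_cancel a); auto. intros i Hi. unfold Bmul.
    rewrite Tmul_sub, Tmul_scale. unfold vsub, vscale. rewrite !(Tinv_spec a) by auto.
    rewrite <- (tmv_veq m A _ _ Hy). fold (Smul y).
    rewrite Tmul_Smul, (Smul_veq _ _ (veq_sym m _ _ Hx)). unfold vadd, vscale.
    rewrite Hx by auto. ring. }
  assert (H : veq m (residual a f) (mv m A (vscale (-1) (Bmul a (Smul x))))).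
  { intros i Hi. unfold residual. rewrite (mv_veq m A _ _ Hsol), mv_sub, mv_scale.
    unfold vsub, vscale. rewrite <- Hy by auto. ring. }
  rewrite (norm_veq m _ _ H). eapply Rle_trans; [apply HA|].
  apply Rmult_le_compat_l; auto. rewrite norm_scale, Rabs_left by lra.
  pose proof (Bmul_Smul_le a x Ha). lra.
Qed.

Lemma Smul_pseudo_inverse : exists P : mat, forall w,
  (forall v, veq m (mv m A v) vzero -> inner m w v = 0) -> veq m (Smul (tmv m P w)) w.
Proof.
  destruct (PseudoInverse.pseudo_inverse_exists m Smat) as [P HP].
  exists P. intros w Hw.
  rewrite Smul_mat, <- trm_Smat, <- tmv_mv.
  apply HP. intros v Hv. apply Hw, Smul_kernel. rewrite Smul_mat. exact Hv.
Qed.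

End NormalOperator.

Section Iteration.
Variables (m : nat) (A : mat) (q : R) (f g y z x : vec).
Hypotheses (Hq : 0 < q) (Hy : veq m (mv m A y) f)
  (Hz : veq m (Smul m A z) (tmv m A (vsub g f))) (Hx : veq m (Smul m A x) y).

Lemma uu_step_error a u X Z : 0 < a ->
  veq m (vsub u (vadd y z)) (vsub Z (Smul m A X)) ->
  veq m (vsub (vadd (vscale a (Tinv m A a u)) (Tinv m A a (tmv m A g))) (vadd y z))
        (vsub (Bmul m A a Z) (Smul m A (Bmul m A a X))).
Proof.
  intros Ha Hu.
  assert (Hg : veq m (tmv m A g) (vadd (Smul m A y) (Smul m A z))).
  { intros i Hi.
    replace g with (vadd f (vsub g f)) at 1
      by (apply vec_ext; intro j; unfold vadd, vsub; ring_simplify; reflexivity).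
    rewrite !tmv_mv, mv_add, <- !tmv_mv, <- (tmv_veq m A _ _ Hy).
    unfold vadd. rewrite <- Hz by auto. reflexivity. }
  assert (HSX : veq m (Tmul m A a (Smul m A (Bmul m A a X))) (vscale a (Smul m A X))).
  { intros i Hi. unfold Bmul. rewrite <- Smul_Tmul, Tmul_scale, (Smul_veq m A _ (vscale a X)).
    - rewrite Smul_scale. reflexivity.
    - intros j Hj. unfold vscale. rewrite (Tinv_spec m A a) by auto. reflexivity. }
  apply (Tmul_cancel m A a); auto. intros i Hi.
  rewrite !Tmul_sub, !Tmul_add. unfold vsub, vadd. rewrite HSX by auto.
  unfold Bmul. rewrite !Tmul_scale. unfold vscale. rewrite !(Tinv_spec m A a), Hg by auto.
  specialize (Hu i Hi). rewrite !Tmul_Smul. unfold vadd, vsub, vscale in *.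
  replace (u i) with (Z i - Smul m A X i + (y i + z i)) by lra. ring.
Qed.

Lemma uu_S k : uu m A q g (S k) =
  vadd (vscale (q ^ S k) (Tinv m A (q ^ S k) (uu m A q g k))) (Tinv m A (q ^ S k) (tmv m A g)).
Proof. reflexivity. Qed.

Lemma uu_error_decomposition k : exists X Z, norm m X <= norm m x /\ norm m Z <= norm m z /\
  veq m (vsub (uu m A q g k) (vadd y z)) (vsub Z (Smul m A X)).
Proof.
  induction k as [|k [X [Z [HX [HZ HI]]]]].
  - exists x, (vscale (-1) z). split; [lra|]. split.
    + rewrite norm_scale, Rabs_left by lra. lra.
    + intros i Hi. simpl. unfold vsub, vadd, vscale, vzero. rewrite Hx by auto. ring.
  - assert (Ha : 0 < q ^ S k) by (apply pow_lt; auto).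
    exists (Bmul m A (q ^ S k) X), (Bmul m A (q ^ S k) Z). split; [|split].
    + eapply Rle_trans; [apply Bmul_contraction|]; auto.
    + eapply Rle_trans; [apply Bmul_contraction|]; auto.
    + rewrite uu_S. apply uu_step_error; auto.
Qed.

Lemma uu_error_bound k :
  norm m (vsub (uu m A q g (S k)) y) <= 2 * q ^ S k * norm m x + 2 * norm m z.
Proof.
  destruct (uu_error_decomposition k) as [X [Z [HX [HZ HI]]]].
  assert (Ha : 0 < q ^ S k) by (apply pow_lt; auto).
  pose proof (uu_step_error _ _ X Z Ha HI) as H. rewrite <- uu_S in H.
  pose proof (Smul_Bmul m A _ X Ha) as HSB.
  assert (E : veq m (vsub (uu m A q g (S k)) y)
                (vadd (vsub (Bmul m A (q ^ S k) Z) (Bmul m A (q ^ S k) (Smul m A X))) z)).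
  { intros i Hi. specialize (H i Hi). specialize (HSB i Hi). unfold vsub, vadd in *. lra. }
  rewrite (norm_veq m _ _ E). eapply Rle_trans; [apply norm_triangle|].
  pose proof (norm_sub_le m (Bmul m A (q ^ S k) Z) (Bmul m A (q ^ S k) (Smul m A X))).
  pose proof (Bmul_contraction m A _ Z Ha). pose proof (Bmul_Smul_le m A _ X Ha). nra.
Qed.

End Iteration.

Lemma min_norm_solution_orthogonal m A f y : min_norm_solution m A f y ->
  forall v, veq m (mv m A v) vzero -> inner m y v = 0.
Proof.
  intros [Hy Hmin] v Hv.
  set (c := inner m y v). set (K := inner m v v).
  assert (HK : 0 <= K) by apply inner_ge_0.
  (* compare [y] with the competitor [y + t v], [t = - c / (K + 1)] *)
  set (t := - c / (K + 1)).
  assert (Hsol : veq m (mv m A (vadd y (vscale t v))) f).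
  { intros i Hi. rewrite mv_add, mv_scale. unfold vadd, vscale. rewrite Hv, Hy by auto.
    unfold vzero. ring. }
  pose proof (Hmin _ Hsol) as Hn.
  pose proof (norm_ge_0 m y). pose proof (norm_ge_0 m (vadd y (vscale t v))).
  assert (Hi : inner m y y <= inner m (vadd y (vscale t v)) (vadd y (vscale t v)))
    by (rewrite <- !norm_sqr; nra).
  rewrite inner_add_l, !inner_add_r, !inner_scale_l, !inner_scale_r, (inner_sym m v y) in Hi.
  fold c K in Hi.
  assert (E : t * c + t * c + t * (t * K) = - (c * c) * (K + 2) / ((K + 1) * (K + 1)))
    by (unfold t; field; lra).
  assert (0 <= - (c * c) * (K + 2)).
  { replace (- (c * c) * (K + 2))
      with ((- (c * c) * (K + 2) / ((K + 1) * (K + 1))) * ((K + 1) * (K + 1))) by (field; lra).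
    apply Rmult_le_pos; nra. }
  nra.
Qed.

Lemma Rpower_gt_base d eps : 0 < d < 1 -> 0 < eps < 1 -> d < Rpower d eps.
Proof.
  intros Hd He. unfold Rpower.
  assert (ln d < 0) by (rewrite <- ln_1; apply ln_increasing; lra).
  rewrite <- (exp_ln d) at 1 by lra. apply exp_increasing. nra.
Qed.

Lemma Rpower_small C eps rho : 0 < C -> 0 < eps < 1 -> 0 < rho ->
  exists d0, 0 < d0 /\ forall d, 0 < d < d0 -> d < 1 -> d + C * Rpower d eps < rho.
Proof.
  intros HC He Hr. set (t := rho / (1 + C)).
  assert (Ht : 0 < t) by (unfold t; apply Rdiv_lt_0_compat; lra).
  exists (Rpower t (/ eps)). split; [unfold Rpower; apply exp_pos|].
  intros d Hd Hd1.
  assert (H1 : Rpower d eps < t).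
  { replace t with (Rpower (Rpower t (/ eps)) eps).
    - apply Rlt_Rpower_l; lra.
    - rewrite Rpower_mult, Rinv_l, Rpower_1; lra. }
  pose proof (Rpower_gt_base d eps ltac:(lra) He).
  assert (t * (1 + C) = rho) by (unfold t; field; lra). nra.
Qed.

Lemma pow_mul_small q c e : 0 < q < 1 -> 0 <= c -> 0 < e ->
  exists N, forall n, (N <= n)%nat -> c * q ^ n < e.
Proof.
  intros Hq Hc He.
  destruct (pow_lt_1_zero q ltac:(rewrite Rabs_pos_eq; lra) (e / (c + 1))) as [N HN].
  { apply Rdiv_lt_0_compat; lra. }
  exists N. intros n Hn. specialize (HN n Hn). rewrite Rabs_pos_eq in HN by (apply pow_le; lra).
  apply (Rmult_lt_compat_r (c + 1)) in HN; [|lra].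
  replace (e / (c + 1) * (c + 1)) with e in HN by (field; lra).
  pose proof (pow_le q n ltac:(lra)). nra.
Qed.

Lemma finite_min_pos (h : nat -> R) : (forall n, (1 <= n)%nat -> 0 < h n) ->
  forall N, exists rho, 0 < rho /\ forall n, (1 <= n)%nat -> (n <= N)%nat -> rho <= h n.
Proof.
  intros Hh N. induction N as [|N [r [Hr H]]].
  - exists 1. split; [lra|]. intros; lia.
  - exists (Rmin r (h (S N))). split; [apply Rmin_pos; auto; apply Hh; lia|].
    intros n H1 H2. destruct (Nat.eq_dec n (S N)) as [->|].
    + apply Rmin_r.
    + eapply Rle_trans; [apply Rmin_l | apply H; lia].
Qed.

Lemma exists_least (P : nat -> Prop) :
  (exists n, P n) -> exists n, P n /\ forall k, (k < n)%nat -> ~ P k.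
Proof.
  intros [n Hn]. apply NNPP. intros Hno.
  assert (H : forall n k, (k <= n)%nat -> ~ P k).
  { induction n0; intros k Hk Pk; apply Hno; exists k; split; auto.
    - intros; lia.
    - intros j Hj. apply IHn0. lia. }
  exact (H n n (le_n n) Hn).
Qed.

Section DiscrepancyPrinciple.
Variables (m : nat) (A : mat) (f y : vec) (q C eps : R) (fd : R -> vec).
Hypotheses (Hy : min_norm_solution m A f y) (Hq : 0 < q < 1) (HC : 1 < C) (Heps : 0 < eps < 1)
  (Hfd_close : forall delta, 0 < delta < 1 -> norm m (vsub (fd delta) f) <= delta).

Lemma normal_preimage : exists x, veq m (Smul m A x) y.
Proof.
  destruct (Smul_pseudo_inverse m A) as [P HP].
  exists (tmv m P y). apply HP, (min_norm_solution_orthogonal m A f y Hy).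
Qed.

Lemma noise_preimage : exists K, 0 <= K /\ forall w, exists z,
  veq m (Smul m A z) (tmv m A w) /\ norm m z <= K * norm m w.
Proof.
  destruct (Smul_pseudo_inverse m A) as [P HP].
  destruct (mv_bounded m (trm P)) as [L1 [HL1 HP1]].
  destruct (mv_bounded m (trm A)) as [L2 [HL2 HA2]].
  exists (L1 * L2). split; [apply Rmult_le_pos; auto|].
  intros w. exists (tmv m P (tmv m A w)). split.
  - apply HP. intros v Hv. rewrite inner_tmv, (inner_veq m w w _ vzero), inner_sym, inner_0_l;
      auto. intros i _; reflexivity.
  - rewrite (tmv_mv m P). eapply Rle_trans; [apply HP1|].
    rewrite Rmult_assoc. apply Rmult_le_compat_l; auto. apply HA2.
Qed.

Lemma residual_fd_split delta n :
  veq m (residual m A (q ^ n) (fd delta))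
    (vadd (residual m A (q ^ n) f) (residual m A (q ^ n) (vsub (fd delta) f))).
Proof.
  replace (fd delta) with (vadd f (vsub (fd delta) f)) at 1
    by (apply vec_ext; intro i; unfold vadd, vsub; ring_simplify; reflexivity).
  apply residual_add, pow_lt. lra.
Qed.

Lemma stop_cond_eventually delta : 0 < delta < 1 ->
  exists n, (1 <= n)%nat /\ stop_cond m A q C eps delta (fd delta) n.
Proof.
  intros Hd.
  destruct normal_preimage as [x Hx].
  destruct (mv_bounded m A) as [LA [HLA HA]].
  pose proof (Rpower_gt_base delta eps Hd Heps).
  destruct (pow_mul_small q (LA * (2 * norm m x)) (C * Rpower delta eps - delta) Hq)
    as [N HN].
  { pose proof (norm_ge_0 m x). nra. }
  { nra. }
  exists (Nat.max N 1). split; [lia|].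
  set (n := Nat.max N 1). specialize (HN n ltac:(unfold n; lia)).
  assert (Ha : 0 < q ^ n) by (apply pow_lt; lra).
  unfold stop_cond. fold (residual m A (q ^ n) (fd delta)).
  rewrite (norm_veq m _ _ (residual_fd_split delta n)).
  eapply Rle_trans; [apply norm_triangle|].
  pose proof (residual_le_range m A _ f y x LA Ha HLA HA (proj1 Hy) Hx).
  pose proof (residual_le m A _ (vsub (fd delta) f) Ha).
  pose proof (Hfd_close delta Hd). nra.
Qed.

Lemma n_delta_spec delta : 0 < delta < 1 ->
  (1 <= n_delta m A q C eps delta (fd delta))%nat /\
  stop_cond m A q C eps delta (fd delta) (n_delta m A q C eps delta (fd delta)).
Proof.
  intros Hd.
  destruct (exists_least _ (stop_cond_eventually delta Hd)) as [n [[Hn1 Hns] Hleast]].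
  assert (Hspec := epsilon_spec (inhabits 1%nat)
    (fun n => (1 <= n)%nat /\ stop_cond m A q C eps delta (fd delta) n /\
       forall k, (1 <= k)%nat -> (k < n)%nat -> ~ stop_cond m A q C eps delta (fd delta) k)).
  destruct Hspec as [H1 [H2 _]]; [|split; assumption].
  exists n. repeat split; auto. intros k Hk1 Hk2 Hs. exact (Hleast k Hk2 (conj Hk1 Hs)).
Qed.

Lemma n_delta_unbounded : ~ veq m f vzero -> forall N, exists d0, 0 < d0 /\
  forall delta, 0 < delta < d0 -> delta < 1 -> (N < n_delta m A q C eps delta (fd delta))%nat.
Proof.
  intros Hf N.
  destruct (finite_min_pos (fun n => norm m (residual m A (q ^ n) f))
              (fun n _ => residual_pos m A (q ^ n) f (pow_lt q n ltac:(lra)) Hf) N)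
    as [rho [Hrho Hmin]].
  destruct (Rpower_small C eps rho ltac:(lra) Heps Hrho) as [d0 [Hd0 Hsmall]].
  exists d0. split; auto. intros delta Hd Hd1.
  destruct (n_delta_spec delta ltac:(lra)) as [Hn1 Hns].
  set (n := n_delta m A q C eps delta (fd delta)) in *.
  destruct (Nat.lt_ge_cases N n) as [|HnN]; auto. exfalso.
  assert (Ha : 0 < q ^ n) by (apply pow_lt; lra).
  unfold stop_cond in Hns. fold (residual m A (q ^ n) (fd delta)) in Hns.
  rewrite (norm_veq m _ _ (residual_fd_split delta n)) in Hns.
  pose proof (norm_add_ge m (residual m A (q ^ n) f) (residual m A (q ^ n) (vsub (fd delta) f))).
  pose proof (residual_le m A _ (vsub (fd delta) f) Ha).
  pose proof (Hfd_close delta ltac:(lra)).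
  pose proof (Hmin n Hn1 HnN). pose proof (Hsmall delta Hd Hd1). lra.
Qed.

Lemma iterate_error_bound : exists K, 0 <= K /\ forall x, veq m (Smul m A x) y ->
  forall delta k, 0 < delta < 1 ->
  norm m (vsub (uu m A q (fd delta) (S k)) y) <= 2 * q ^ S k * norm m x + K * delta.
Proof.
  destruct noise_preimage as [K [HK Hnoise]].
  exists (2 * K). split; [lra|]. intros x Hx delta k Hd.
  destruct (Hnoise (vsub (fd delta) f)) as [z [Hz Hzle]].
  pose proof (uu_error_bound m A q f (fd delta) y z x ltac:(lra) (proj1 Hy) Hz Hx k).
  pose proof (Hfd_close delta Hd). nra.
Qed.

Lemma convergence_nonzero_data : ~ veq m f vzero ->
  forall e, 0 < e -> exists d, 0 < d /\ forall delta, 0 < delta < d ->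
    norm m (vsub (useq m A q (fd delta) (n_delta m A q C eps delta (fd delta))) y) < e.
Proof.
  intros Hf e He.
  destruct normal_preimage as [x Hx].
  destruct iterate_error_bound as [K [HK Hbound]].
  destruct (pow_mul_small q (2 * norm m x) (e / 2) Hq) as [N HN];
    [pose proof (norm_ge_0 m x); lra | lra |].
  destruct (n_delta_unbounded Hf (S N)) as [d0 [Hd0 Hlarge]].
  exists (Rmin (Rmin 1 d0) (e / (2 * K + 1))).
  split; [apply Rmin_pos; [apply Rmin_pos|apply Rdiv_lt_0_compat]; lra|].
  intros delta Hd.
  pose proof (Rmin_l (Rmin 1 d0) (e / (2 * K + 1))). pose proof (Rmin_r (Rmin 1 d0) (e / (2 * K + 1))).
  pose proof (Rmin_l 1 d0). pose proof (Rmin_r 1 d0).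
  assert (HKd : K * delta < e / 2).
  { assert (delta * (2 * K + 1) < e).
    { replace e with (e / (2 * K + 1) * (2 * K + 1)) by (field; lra).
      apply Rmult_lt_compat_r; lra. }
    nra. }
  specialize (Hlarge delta ltac:(lra) ltac:(lra)).
  unfold useq. destruct (n_delta m A q C eps delta (fd delta)) as [|[|k]] eqn:En; [lia|lia|].
  replace (S (S k) - 1)%nat with (S k) by lia.
  pose proof (Hbound x Hx delta k ltac:(lra)). pose proof (HN (S k) ltac:(lia)). lra.
Qed.

Lemma convergence_zero_data : veq m f vzero ->
  forall e, 0 < e -> exists d, 0 < d /\ forall delta, 0 < delta < d ->
    norm m (vsub (useq m A q (fd delta) (n_delta m A q C eps delta (fd delta))) y) < e.
Proof.
  intros Hf e He.
  assert (Hy0 : veq m y vzero).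
  { apply norm_eq_0. pose proof (norm_ge_0 m y).
    pose proof (proj2 Hy vzero ltac:(rewrite mv_vzero; apply veq_sym; exact Hf)).
    rewrite norm_vzero in *. lra. }
  destruct iterate_error_bound as [K [HK Hbound]].
  exists (Rmin 1 (e / (K + 1))). split; [apply Rmin_pos; [|apply Rdiv_lt_0_compat]; lra|].
  intros delta Hd.
  pose proof (Rmin_l 1 (e / (K + 1))). pose proof (Rmin_r 1 (e / (K + 1))).
  assert (HKd : K * delta < e).
  { assert (delta * (K + 1) < e).
    { replace e with (e / (K + 1) * (K + 1)) by (field; lra).
      apply Rmult_lt_compat_r; lra. }
    nra. }
  unfold useq. destruct (n_delta m A q C eps delta (fd delta) - 1)%nat as [|k].
  - rewrite norm_veq_0; [lra|]. intros i Hi. pose proof (Hy0 i Hi). simpl. unfold vsub, vzero in *. lra.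
  - assert (Hx0 : veq m (Smul m A vzero) y).
    { intros i Hi. unfold Smul. rewrite mv_vzero, tmv_mv, mv_vzero, Hy0 by auto. reflexivity. }
    pose proof (Hbound vzero Hx0 delta k ltac:(lra)). rewrite norm_vzero in *. lra.
Qed.

End DiscrepancyPrinciple.

Theorem theorem3p6 (m : nat) (A : mat) (f y : vec) (q C eps : R)
  (fd : R -> vec)
  (Hrange : exists x, veq m (mv m A x) f)
  (Hy : min_norm_solution m A f y)
  (Hq : 0 < q < 1) (HC : 1 < C) (Heps : 0 < eps < 1)
  (Hfd_close : forall delta, 0 < delta < 1 -> norm m (vsub (fd delta) f) <= delta)
  (Hfd_large : forall delta, 0 < delta < 1 -> norm m (fd delta) > C * Rpower delta eps) :
  forall e, 0 < e -> exists d, 0 < d /\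
    forall delta, 0 < delta < d ->
      norm m (vsub (useq m A q (fd delta) (n_delta m A q C eps delta (fd delta))) y) < e.
Proof.
  (* [Hrange] follows from [Hy] *)
  destruct (classic (veq m f vzero)) as [Hf | Hf].
  - exact (convergence_zero_data m A f y q C eps fd Hy Hq Hfd_close Hf).
  - exact (convergence_nonzero_data m A f y q C eps fd Hy Hq HC Heps Hfd_close Hf).
Qed.
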